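(* Let $f:\mathbb R^n\to\mathbb R$ be differentiable with $L$-Lipschitz gradient (w.r.t. $\|\cdot\|_2$). Let $\{x_t\}_{t\ge0}$, $\{L_t\}_{t\ge0}$ be generated by the AC-FW algorithm described in the context, where the damping sequence satisfies Condition (D), let $\eta>1$, and assume $L_0>0$. Then the complement $\mathbb Z_+\setminus\mathcal I_\eta$ is finite (hence $\mathcal I_\eta$ is infinite). Moreover, if $\{k_t\}_{t\ge0}$ denotes the elements of $\mathcal I_\eta$ in increasing order, then for every $t\ge 0$, $$t\le k_t\le t+\left\lfloor \log_\eta\!\left(\frac{L}{rL_0}\right)\right\rfloor .$$
   Context: Let $\mathcal A\subset\mathbb R^n$ be a compact set (the dictionary) and let the feasible set be $\mathcal X=\mathrm{conv}(\mathcal A)$ or $\mathcal X=\mathrm{lin}(\mathcal A)$. For $x\neq y$ let $\ell(x,y):=2|f(y)-f(x)-\nabla f(x)^\top(y-x)|/\|y-x\|_2^2$, and $\ell(x,x):=0$. AC-FW algorithm: given a damping sequence $\{r_t\}_{t\ge0}$ and a direction-finding subroutine, pick $x_{-1}\in\mathcal A$, $x_0\in\arg\min_{v\in\mathcal A}\nabla f(x_{-1})^\top v$, $L_0:=\ell(x_{-1},x_0)$. For $t=0,1,2,\dots$: choose $v_t\in\arg\min_{v\in\mathcal A}\nabla f(x_t)^\top v$; the subroutine returns $d_t\in\mathbb R^n$ and $\gamma_t^{\max}\in(0,\infty]$; set $\gamma_t:=\min\{\nabla f(x_t)^\top d_t/(L_t\|d_t\|_2^2),\gamma_t^{\max}\}$,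 $\bar x_{t+1}:=x_t-\gamma_t d_t$, $L_{t+1}:=\max\{\ell(x_t,\bar x_{t+1}),r_tL_t\}$, and $x_{t+1}:=\bar x_{t+1}$ if $f(\bar x_{t+1})<f(x_t)$, else $x_{t+1}:=x_t$. $\mathbb Z_+$ is the set of nonnegative integers. For $\eta>1$, $\mathcal I_\eta:=\{t\ge0: L_{t+1}\le \eta L_t\}$. Condition (D): $r_t\in(0,1]$ for all $t\ge0$ and $r:=\prod_{t\ge0}r_t\in(0,1]$. *)

From HB Require Import structures.
From mathcomp Require Import all_boot all_order all_algebra.
From mathcomp Require Import all_classical all_reals all_analysis.
Set Implicit Arguments. Unset Strict Implicit. Unset Printing Implicit Defensive.
Import Order.TTheory GRing.Theory Num.Theory.
Import numFieldNormedType.Exports.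
Local Open Scope classical_set_scope.
Local Open Scope ring_scope.

Section Defs.
Variables (R : realType) (n : nat).
Implicit Types (u v x y : 'rV[R]_n).

Definition dot u v : R := \sum_(i < n) u 0 i * v 0 i.
Definition norm2 u : R := Num.sqrt (dot u u).

Definition grad (f : 'rV[R]_n -> R) x : 'rV[R]_n :=
  \row_(i < n) ('d f x (delta_mx 0 i : 'rV[R]_n)).

Definition ell (f : 'rV[R]_n -> R) x y : R :=
  if x == y then 0
  else 2 * `|f y - f x - dot (grad f x) (y - x)| / (norm2 (y - x)) ^+ 2.

Definition lin_argmin (A : set 'rV[R]_n) (g : 'rV[R]_n) v : Prop :=
  A v /\ forall w, A w -> dot g v <= dot g w.

(* The sequences (x_t), (L_t) are generated by AC-FW with damping sequence
   r, dictionary A, starting point xm1 = x_{-1}, LMO outputs v_t, and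
   direction-finding subroutine outputs d_t, gmax_t in (0, +oo]; gamma_t and
   xbar_{t+1} are the step size and trial point. *)
Definition acfw_run (f : 'rV[R]_n -> R) (A : set 'rV[R]_n) (r : nat -> R)
  (xm1 : 'rV[R]_n) (x : nat -> 'rV[R]_n) (L : nat -> R)
  (v : nat -> 'rV[R]_n) (d : nat -> 'rV[R]_n) (gmax : nat -> \bar R)
  (gamma : nat -> R) (xbar : nat -> 'rV[R]_n) : Prop :=
  [/\ A xm1,
      lin_argmin A (grad f xm1) (x 0%N),
      L 0%N = ell f xm1 (x 0%N)
    & forall t : nat,
      [/\ lin_argmin A (grad f (x t)) (v t) /\ (0 < gmax t)%E,
          (gamma t)%:E =
            Order.min ((dot (grad f (x t)) (d t) / (L t * (norm2 (d t)) ^+ 2))%:E)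
                      (gmax t),
          xbar t.+1 = x t - gamma t *: d t,
          L t.+1 = Num.max (ell f (x t) (xbar t.+1)) (r t * L t)
        & x t.+1 = if f (xbar t.+1) < f (x t) then xbar t.+1 else x t]].

Definition condD (r : nat -> R) (rr : R) : Prop :=
  [/\ forall t, 0 < r t <= 1,
      0 < rr <= 1
    & (fun N : nat => \prod_(t < N) r t) @ \oo --> rr].

Definition I_eta (L : nat -> R) (eta : R) : set nat :=
  [set t | L t.+1 <= eta * L t].

End Defs.

(** Along the damped update L_{t+1} >= r_t L_t always, and L_{t+1} > eta L_t
    at every t outside I_eta.  So if N_T indices below T lie outside I_eta,
      L_0 eta^{N_T} r <= L_0 eta^{N_T} prod_{t<T} r_t <= L_T <= L,
    the last inequality because the descent lemma bounds every curvature
    estimate ell(x, y) by the Lipschitz constant L.  Hence N_T never exceeds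
    floor(log_eta (L / (r L_0))): the complement of I_eta is finite, and
    the indices below k_t comprise at most t elements of I_eta and at most
    that floor outside it. *)
From HB Require Import structures.
From mathcomp Require Import all_boot all_order all_algebra.
From mathcomp Require Import all_classical all_reals all_analysis.
From mathcomp Require Import ring lra.
Set Implicit Arguments. Unset Strict Implicit. Unset Printing Implicit Defensive.
Import Order.TTheory GRing.Theory Num.Theory.
Import numFieldNormedType.Exports.
Local Open Scope classical_set_scope.
Local Open Scope ring_scope.

Section EuclideanSpace.
Variables (R : realType) (n : nat).
Implicit Types (u v w : 'rV[R]_n).

Lemma dotC u v : dot u v = dot v u.
Proof. by apply: eq_bigr => i _; rewrite mulrC. Qed.

Lemma dotBl u w v : dot (u - w) v = dot u v - dot w v.
Proof. by rewrite /dot -sumrB; apply: eq_bigr => i _; rewrite !mxE mulrBl. Qed.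

Lemma dotBr u w v : dot v (u - w) = dot v u - dot v w.
Proof. by rewrite ![dot v _]dotC dotBl. Qed.

Lemma dotZl (a : R) u v : dot (a *: u) v = a * dot u v.
Proof. by rewrite /dot mulr_sumr; apply: eq_bigr => i _; rewrite !mxE mulrA. Qed.

Lemma dotZr (a : R) u v : dot v (a *: u) = a * dot v u.
Proof. by rewrite ![dot v _]dotC dotZl. Qed.

Lemma dot0r u : dot u 0 = 0.
Proof. by rewrite -(scale0r (0 : 'rV[R]_n)) dotZr mul0r. Qed.

Lemma dot_self_ge0 u : 0 <= dot u u.
Proof. by apply: sumr_ge0 => i _; rewrite -expr2 sqr_ge0. Qed.

Lemma dot_self_eq0 u : (dot u u == 0) = (u == 0).
Proof.
apply/idP/eqP => [|->]; last by rewrite dot0r.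
rewrite psumr_eq0 => [/allP u0|i _]; last by rewrite -expr2 sqr_ge0.
apply/rowP => i; rewrite mxE.
by have /= := u0 i (mem_index_enum _); rewrite mulf_eq0 orbb => /eqP.
Qed.

Lemma dot_sqr_le u v : dot u v ^+ 2 <= dot u u * dot v v.
Proof.
have [->|v0] := eqVneq v 0; first by rewrite !dot0r expr0n mulr0.
have vv_gt0 : 0 < dot v v by rewrite lt_def dot_self_eq0 v0 dot_self_ge0.
rewrite -subr_ge0 -(pmulr_rge0 _ vv_gt0).
have := dot_self_ge0 (dot v v *: u - dot u v *: v).
rewrite !(dotBl, dotBr, dotZl, dotZr) [dot v u]dotC; congr (_ <= _); ring.
Qed.

Lemma norm2_gt0 u : u != 0 -> 0 < norm2 u.
Proof. by move=> u0; rewrite sqrtr_gt0 lt_def dot_self_eq0 u0 dot_self_ge0. Qed.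

Lemma norm2Z (a : R) u : norm2 (a *: u) = `|a| * norm2 u.
Proof.
by rewrite /norm2 dotZl dotZr mulrA -expr2 sqrtrM ?sqr_ge0 // sqrtr_sqr.
Qed.

Lemma dot_le_norm2 u v : `|dot u v| <= norm2 u * norm2 v.
Proof.
rewrite -sqrtrM ?dot_self_ge0 // -sqrtr_sqr.
by rewrite ler_sqrt ?dot_sqr_le // mulr_ge0 ?dot_self_ge0.
Qed.

Lemma diff_dot_grad (f : 'rV[R]_n -> R) u h : 'd f u h = dot (grad f u) h.
Proof.
rewrite {1}(row_sum_delta h) linear_sum.
by apply: eq_bigr => i _; rewrite linearZ !mxE mulrC.
Qed.

End EuclideanSpace.

Lemma is_derive_along (R : realType) (V : normedModType R) (f : V -> R)
    (x h : V) (s : R) :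
  differentiable f (s *: h + x) ->
  is_derive s 1 (fun t => f (t *: h + x)) ('d f (s *: h + x) h).
Proof.
move=> df.
have dfl : is_diff s (f \o (( *:%R ^~ h) + cst x))
                     ('d f (s *: h + x) \o (( *:%R ^~ h) + 0)).
  exact: is_diff_comp.
apply: DeriveDef; first exact: diff_derivable.
by rewrite deriveE // diff_val /= !fctE addr0 scale1r.
Qed.

Lemma MVT_quadratic_shift (R : realType) (g g' : R -> R) (b : R) :
  (forall s : R, is_derive s 1 g (g' s)) ->
  exists2 c, 0 < c < 1 & g 1 - g 0 + b = g' c + 2 * b * c.
Proof.
move=> dg; pose phi := g + b \*: (@id R * @id R).
have dphi (s : R) : is_derive s 1 phi (g' s + 2 * b * s).
  apply: (is_derive_eq (is_deriveD (dg s) (is_deriveZ b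
    (is_deriveM (@is_derive_id _ R s 1) (@is_derive_id _ R s 1))))).
  by rewrite /GRing.scale /=; ring.
have cphi : {within `[0, 1], continuous phi}.
  apply: derivable_within_continuous => s _.
  exact: (@ex_derive _ _ _ _ _ _ _ (dphi s)).
have [c c01 E] := MVT ltr01 (fun s _ => dphi s) cphi.
exists c; first by rewrite in_itv in c01.
rewrite subr0 mulr1 in E; rewrite -E /phi !fctE /=.
have scaleE (u : R) : b *: u = b * u by [].
by rewrite !scaleE; ring.
Qed.

(* Comparing g with s |-> g 0 +- K s^2 / 2 through the mean value theorem. *)
Lemma increment_le_of_derive_bound (R : realType) (g g' : R -> R) (K : R) :
  (forall s : R, is_derive s 1 g (g' s)) ->
  (forall s : R, 0 < s < 1 -> `|g' s| <= s * K) ->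
  `|g 1 - g 0| <= K / 2.
Proof.
move=> dg g'_le.
have [c c01 Ec] := MVT_quadratic_shift (- (K / 2)) dg.
have [c' c01' Ec'] := MVT_quadratic_shift (K / 2) dg.
move: (g'_le c c01) (g'_le c' c01').
rewrite !ler_norml => /andP[_ g'c] /andP[g'c' _].
by apply/andP; split; nra.
Qed.

Section LipschitzGradient.
Variables (R : realType) (n : nat) (f : 'rV[R]_n -> R) (Lip : R).
Hypothesis f_diff : forall y, differentiable f y.
Hypothesis grad_lip :
  forall y z, norm2 (grad f y - grad f z) <= Lip * norm2 (y - z).

Lemma linearization_error_le x y :
  `|f y - f x - dot (grad f x) (y - x)| <= Lip / 2 * norm2 (y - x) ^+ 2.
Proof.
set h := y - x; set C := dot (grad f x) h.
pose g := (fun s => f (s *: h + x)) - C \*: (@id R).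
have dg (s : R) : is_derive s 1 g ('d f (s *: h + x) h - C).
  apply: (is_derive_eq (is_deriveB (@is_derive_along _ _ f x h s (f_diff _))
    (is_deriveZ C (@is_derive_id _ R s 1)))).
  by rewrite /GRing.scale /= mulr1.
have g'_le (s : R) :
    0 < s < 1 -> `|'d f (s *: h + x) h - C| <= s * (Lip * norm2 h ^+ 2).
  case/andP=> s_gt0 _; rewrite diff_dot_grad /C -dotBl.
  apply: le_trans (dot_le_norm2 _ _) _.
  apply: le_trans (ler_wpM2r (sqrtr_ge0 _) (grad_lip _ _)) _.
  rewrite addrK norm2Z gtr0_norm // -/(norm2 h).
  by have -> : Lip * (s * norm2 h) * norm2 h = s * (Lip * norm2 h ^+ 2) by ring.
have := increment_le_of_derive_bound dg g'_le.
rewrite /g !fctE /= scale1r scale0r add0r subrK scaler0 subr0.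
by rewrite [C%:A]mulr1 addrAC mulrAC.
Qed.

Lemma ell_le_lip x y : x != y -> ell f x y <= Lip.
Proof.
move=> xy; rewrite /ell (negbTE xy).
have h_gt0 : 0 < norm2 (y - x) ^+ 2.
  by rewrite exprn_gt0 // norm2_gt0 // subr_eq0 eq_sym.
rewrite ler_pdivrMr //; have := linearization_error_le x y; lra.
Qed.

Lemma lip_gt0 x y : 0 < ell f x y -> 0 < Lip.
Proof.
move=> ell_gt0; have [xy|xy] := eqVneq x y.
  by rewrite xy /ell eqxx ltxx in ell_gt0.
exact: lt_le_trans ell_gt0 (ell_le_lip xy).
Qed.

End LipschitzGradient.

Lemma ell_ge0 (R : realType) (n : nat) (f : 'rV[R]_n -> R) x y : 0 <= ell f x y.
Proof.
rewrite /ell; case: eqP => // _.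
by rewrite divr_ge0 ?mulr_ge0 ?exprn_ge0 ?sqrtr_ge0.
Qed.

Section ACFWRun.
Variables (R : realType) (n : nat) (f : 'rV[R]_n -> R) (A : set 'rV[R]_n).
Variables (r : nat -> R) (xm1 : 'rV[R]_n) (x : nat -> 'rV[R]_n) (L : nat -> R).
Variables (v d : nat -> 'rV[R]_n) (gmax : nat -> \bar R) (gamma : nat -> R).
Variable xbar : nat -> 'rV[R]_n.
Hypothesis run : acfw_run f A r xm1 x L v d gmax gamma xbar.

Lemma acfw_L0 : L 0%N = ell f xm1 (x 0%N).
Proof. by case: run. Qed.

Lemma acfw_LS t : L t.+1 = Num.max (ell f (x t) (xbar t.+1)) (r t * L t).
Proof. by case: run => _ _ _ /(_ t)[]. Qed.

Lemma acfw_L_damped t : r t * L t <= L t.+1.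
Proof. by rewrite acfw_LS le_max lexx orbT. Qed.

Lemma acfw_L_ge0 t : 0 <= L t.
Proof.
case: t => [|t]; first by rewrite acfw_L0 ell_ge0.
by rewrite acfw_LS le_max ell_ge0.
Qed.

Lemma acfw_L_le (Lip : R) :
  (forall a b, ell f a b <= Lip) -> (forall t, r t <= 1) -> forall t, L t <= Lip.
Proof.
move=> ell_le r_le1; elim=> [|t IH]; first by rewrite acfw_L0.
rewrite acfw_LS ge_max ell_le /=.
exact: le_trans (ler_piMl (acfw_L_ge0 t) (r_le1 t)) IH.
Qed.

End ACFWRun.

Lemma condD_prod_ge (R : realType) (r : nat -> R) (rr : R) :
  condD r rr -> forall T, rr <= \prod_(t < T) r t.
Proof.
case=> r_bd _ prod_cvg T.
have r_ge0 t : 0 <= r t by have /andP[/ltW] := r_bd t.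
have prod_nincr : nonincreasing_seq (fun N => \prod_(t < N) r t).
  apply/nonincreasing_seqP => N; rewrite big_ord_recr /= ler_piMr ?prodr_ge0 //.
  by case/andP: (r_bd N).
rewrite -(cvg_lim _ prod_cvg) //.
by apply: nonincreasing_cvgn_ge => //; apply/cvg_ex; exists rr.
Qed.

Lemma pow_le_floor_ln_div (R : realType) (b a : R) (N : nat) :
  1 < b -> b ^+ N <= a -> (N%:Z <= Num.floor (ln a / ln b))%R.
Proof.
move=> b_gt1 bN_le; have b_gt0 := lt_trans ltr01 b_gt1.
have a_gt0 : 0 < a := lt_le_trans (exprn_gt0 N b_gt0) bN_le.
rewrite floor_ge_int ler_pdivlMr ?ln_gt0 // -pmulrn mulr_natl -lnXn //.
by rewrite ler_ln ?posrE ?exprn_gt0.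
Qed.

Lemma count_iotaS (P : pred nat) T :
  count P (iota 0 T.+1) = (count P (iota 0 T) + P T)%N.
Proof. by rewrite -addn1 iotaD count_cat /= addn0. Qed.

Lemma count_iota_mono (P : pred nat) :
  {homo (fun T => count P (iota 0 T)) : a b / (a <= b)%N}.
Proof. by move=> a b ab; rewrite /= -(subnKC ab) iotaD count_cat leq_addr. Qed.

Lemma bounded_nat_seq_has_max (u : nat -> nat) (B : nat) :
  (forall T, (u T <= B)%N) -> exists T0, forall T, (u T <= u T0)%N.
Proof.
move=> u_le; pose P : pred nat := fun j => `[< exists T, u T = j >].
have P_ex : exists j, P j by exists (u 0%N); apply/asboolP; exists 0%N.
have P_le j : P j -> (j <= B)%N by move=> /asboolP[T <-].
case: (ex_maxnP P_ex P_le) => _ /asboolP[T0 <-] max_T0.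
by exists T0 => T; apply: max_T0; apply/asboolP; exists T.
Qed.

(* A nondecreasing bounded counting function stops growing, so P holds
   nowhere after the index where it attains its maximum. *)
Lemma finite_set_of_count_iota_le (P : pred nat) (B : nat) :
  (forall T, (count P (iota 0 T) <= B)%N) -> finite_set [set t | P t].
Proof.
move=> count_le; have [T0 max_T0] := bounded_nat_seq_has_max count_le.
apply: sub_finite_set (finite_II T0) => t /= Pt.
rewrite ltnNge; apply/negP => T0t.
by move: (max_T0 t.+1); rewrite count_iotaS Pt addn1 ltnNge count_iota_mono.
Qed.

Lemma increasing_leq_id (k : nat -> nat) :
  {homo k : i j / (i < j)%N} -> forall t, (t <= k t)%N.
Proof.
by move=> k_incr; elim=> // t IH; exact: leq_ltn_trans IH (k_incr _ _ _).
Qed.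

Lemma increasing_enum_le (Q : pred nat) (k : nat -> nat) t :
  {homo k : i j / (i < j)%N} -> (forall s, Q s -> exists j, k j = s) ->
  (k t <= t + count (predC Q) (iota 0 (k t)))%N.
Proof.
move=> k_incr Q_enum; have k_mono := leqW_mono (leq_mono k_incr).
rewrite -{1}(size_iota 0 (k t)) -(count_predC Q) leq_add2r -size_filter.
apply: (@leq_trans (size (map k (iota 0 t)))); last by rewrite size_map size_iota.
apply: uniq_leq_size; first exact: filter_uniq (iota_uniq 0 _).
move=> s; rewrite mem_filter mem_iota /= => /andP[Qs s_lt].
have [j kj] := Q_enum s Qs; apply/mapP; exists j => //.
by rewrite mem_iota /= -k_mono kj.
Qed.

Section DampedGrowth.
Variables (R : realType) (L r : nat -> R) (eta rr Lip : R).
Hypothesis eta_gt1 : 1 < eta.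
Hypothesis L0_gt0 : 0 < L 0%N.
Hypothesis r_ge0 : forall t, 0 <= r t.
Hypothesis r_le1 : forall t, r t <= 1.
Hypothesis L_damped : forall t, r t * L t <= L t.+1.
Hypothesis L_le : forall t, L t <= Lip.
Hypothesis rr_gt0 : 0 < rr.
Hypothesis prod_r_ge : forall T, rr <= \prod_(t < T) r t.

Let small_step : pred nat := fun t => L t.+1 <= eta * L t.
Let jumps T := count (predC small_step) (iota 0 T).

Let eta_gt0 : 0 < eta. Proof. exact: lt_trans ltr01 eta_gt1. Qed.

Lemma jumps_growth T : L 0%N * eta ^+ jumps T * \prod_(t < T) r t <= L T.
Proof.
elim: T => [|T IH]; first by rewrite /jumps big_ord0 expr0 !mulr1.
set X := L 0%N * _ * _ in IH.
have X_ge0 : 0 <= X by rewrite !mulr_ge0 ?exprn_ge0 ?prodr_ge0 ?ltW.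
rewrite /jumps count_iotaS -/(jumps T) big_ord_recr /= mulrA -/X.
case: (boolP (small_step T)) => [_|] /=.
  by apply: le_trans (L_damped T); rewrite addn0 mulrC ler_wpM2l.
rewrite /small_step -ltNge => jumpT; apply: le_trans (ltW jumpT).
have -> : L 0%N * eta ^+ (jumps T + 1) * \prod_(t < T) r t * r T = eta * X * r T.
  by rewrite /X addn1 exprSr; ring.
apply: le_trans (ler_piMr _ (r_le1 T)) _; first by rewrite mulr_ge0 // ltW.
by rewrite ler_wpM2l // ltW.
Qed.

Lemma jumps_le_floor T :
  ((jumps T)%:Z <= Num.floor (ln (Lip / (rr * L 0%N)) / ln eta))%R.
Proof.
apply: pow_le_floor_ln_div eta_gt1 _.
rewrite ler_pdivlMr ?mulr_gt0 //.
apply: le_trans (le_trans (jumps_growth T) (L_le T)).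
have -> : eta ^+ jumps T * (rr * L 0%N) = L 0%N * eta ^+ jumps T * rr by ring.
by rewrite ler_wpM2l ?mulr_ge0 ?exprn_ge0 ?prod_r_ge // ltW.
Qed.

Lemma I_eta_complement_finite : finite_set (~` I_eta L eta).
Proof.
have jumps_le T : (jumps T <= `|Num.floor (ln (Lip / (rr * L 0%N)) / ln eta)|)%N.
  by rewrite -lez_nat abszE (le_trans (jumps_le_floor T)) ?ler_norm.
by apply: sub_finite_set (finite_set_of_count_iota_le jumps_le) => t /negP.
Qed.

Lemma I_eta_enum_le (k : nat -> nat) :
  {homo k : i j / (i < j)%N} -> range k = I_eta L eta ->
  forall t, (t <= k t)%N /\
    ((k t)%:Z <= t%:Z + Num.floor (ln (Lip / (rr * L 0%N)) / ln eta))%R.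
Proof.
move=> k_incr k_range t; split; first exact: increasing_leq_id.
have k_enum s : small_step s -> exists j, k j = s.
  move=> Ls; have [j _ kj] : range k s by rewrite k_range.
  by exists j.
move: (increasing_enum_le t k_incr k_enum); rewrite -lez_nat PoszD => /le_trans.
by apply; rewrite lerD2l jumps_le_floor.
Qed.

End DampedGrowth.

Theorem lemma3 (R : realType) (n : nat) (f : 'rV[R]_n -> R) (Lip : R)
  (A : set 'rV[R]_n) (r : nat -> R) (rr : R) (eta : R)
  (xm1 : 'rV[R]_n) (x : nat -> 'rV[R]_n) (L : nat -> R)
  (v : nat -> 'rV[R]_n) (d : nat -> 'rV[R]_n) (gmax : nat -> \bar R)
  (gamma : nat -> R) (xbar : nat -> 'rV[R]_n) :
  (forall y : 'rV[R]_n, differentiable f y) ->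
  (forall y z : 'rV[R]_n,
      norm2 (grad f y - grad f z) <= Lip * norm2 (y - z)) ->
  compact A ->
  acfw_run f A r xm1 x L v d gmax gamma xbar ->
  condD r rr ->
  1 < eta ->
  0 < L 0%N ->
  finite_set (~` I_eta L eta) /\ infinite_set (I_eta L eta) /\
  (forall k : nat -> nat,
     {homo k : i j / (i < j)%N} ->
     range k = I_eta L eta ->
     forall t : nat,
       (t <= k t)%N /\
       ((k t)%:Z <= t%:Z + Num.floor (ln (Lip / (rr * L 0%N)) / ln eta))%R).
Proof.
move=> f_diff grad_lip _ run D eta_gt1 L0_gt0.
have [r_bd /andP[rr_gt0 _] _] := D.
have r_ge0 t : 0 <= r t by case/andP: (r_bd t) => /ltW.
have r_le1 t : r t <= 1 by case/andP: (r_bd t).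
have Lip_gt0 : 0 < Lip.
  apply: (lip_gt0 f_diff grad_lip (x := xm1) (y := x 0%N)).
  by rewrite -(acfw_L0 run).
have ell_le a b : ell f a b <= Lip.
  by have [->|ab] := eqVneq a b; [rewrite /ell eqxx ltW | exact: ell_le_lip].
have L_le := acfw_L_le run ell_le r_le1.
have damped := acfw_L_damped run.
have prod_ge := condD_prod_ge D.
have fin_compl := I_eta_complement_finite eta_gt1 L0_gt0 r_ge0 r_le1 damped L_le
  rr_gt0 prod_ge.
split=> //; split.
  move=> I_fin; apply: infinite_nat.
  by rewrite -(setUv (I_eta L eta)) finite_setU.
exact: I_eta_enum_le eta_gt1 L0_gt0 r_ge0 r_le1 damped L_le rr_gt0 prod_ge.
Qed.
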